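(* Let $X$ be a compact Hausdorff space, $\mathcal C=C(X)$ with the supremum norm, $\alpha\colon X\to X$ continuous, $\delta f=f\circ\alpha$, and $A$ a transfer operator for $(\mathcal C,\delta)$. For $\varphi\in\mathcal C$ and $n\in\mathbb N$ let $\lambda(\varphi,A)=\lim_{k\to\infty}\frac1k\ln\|(A(e^{\varphi}\,\cdot\,))^k\mathbf 1\|$ and $\lambda(n\varphi,A^n)=\lim_{k\to\infty}\frac1k\ln\|(A^n(e^{n\varphi}\,\cdot\,))^k\mathbf 1\|$ be the logarithms of the spectral radii of the operators $f\mapsto A(e^\varphi f)$ and $f\mapsto A^n(e^{n\varphi}f)$ respectively. Then for all $\varphi\in\mathcal C$ and $n\in\mathbb N$, \[ n\lambda(\varphi,A)\le\lambda(n\varphi,A^n). \]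
   Context: A transfer operator for $(\mathcal C,\delta)$ is a positive linear operator $A\colon\mathcal C\to\mathcal C$ (mapping nonnegative functions to nonnegative functions) with $A((\delta f)g)=f\,Ag$ for all $f,g\in\mathcal C$. $\mathbf 1$ is the constant function $1$. *)

From HB Require Import structures.
From mathcomp Require Import all_boot all_order all_algebra.
From mathcomp Require Import all_classical all_reals all_analysis.
Set Implicit Arguments. Unset Strict Implicit. Unset Printing Implicit Defensive.
Import Order.TTheory GRing.Theory Num.Theory.
Import numFieldNormedType.Exports.
Local Open Scope classical_set_scope.
Local Open Scope ring_scope.

Definition supnorm (R : realType) (X : Type) (f : X -> R) : R :=
  sup (range (fun x => `|f x|)).

(* transfer operator for (C(X), delta), delta f = f \o alpha,
   with A acting on C(X) (given as a map on X -> R, only its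
   behaviour on continuous functions matters) *)
Definition is_transfer_operator (R : realType) (X : topologicalType)
  (alpha : X -> X) (A : (X -> R) -> (X -> R)) : Prop :=
  [/\ (forall f : X -> R, continuous f -> continuous (A f)),
      (forall (a : R) (f g : X -> R), continuous f -> continuous g ->
          A (fun x => a * f x + g x) = (fun x => a * A f x + A g x)),
      (forall f : X -> R, continuous f -> (forall x, 0 <= f x) -> forall x, 0 <= A f x)
    & (forall f g : X -> R, continuous f -> continuous g ->
          A (fun x => f (alpha x) * g x) = (fun x => f x * A g x))].

Definition weighted (R : realType) (X : Type) (A : (X -> R) -> (X -> R))
  (phi : X -> R) (f : X -> R) : X -> R :=
  A (fun x => expR (phi x) * f x).

(* log of the spectral radius:  lim_k (1/k) ln || T^k 1 ||, in \bar R
   (value -oo when T^k 1 = 0) *)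
Definition log_spec_rad (R : realType) (X : Type)
  (T : (X -> R) -> (X -> R)) : \bar R :=
  limn (fun k : nat =>
    let r := supnorm (iter k T (fun _ => 1%R)) in
    if (0 < r)%R then ((ln r) / k%:R)%R%:E else -oo)%E.

Definition lambda (R : realType) (X : Type) (phi : X -> R)
  (A : (X -> R) -> (X -> R)) : \bar R :=
  log_spec_rad (weighted A phi).

From HB Require Import structures.
From mathcomp Require Import all_boot all_order all_algebra.
From mathcomp Require Import all_classical all_reals all_analysis.
From mathcomp Require Import ring lra zify.
Import Order.TTheory GRing.Theory Num.Theory.
Import numFieldNormedType.Exports.
Local Open Scope classical_set_scope.
Local Open Scope ring_scope.

(* Let T = A(e^phi .) and B = A^n(e^{n phi} .). Positivity gives
   T^j f <= ||f|| T^j 1, so k |-> ||T^k 1|| and k |-> ||B^k 1|| are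
   submultiplicative and, by Fekete's lemma, each lambda is the infimum of
   (1/k) ln ||.^k 1||.  Iterating the transfer identity, T^N 1 = A^N (exp S_N phi)
   with S_N the Birkhoff sum along alpha.  For N = n(k+2), S_N phi is the sum
   of the n Birkhoff sums of phi along alpha^n started at x, ..., alpha^(n-1) x,
   and the exponential of a sum of n terms is at most the sum of the
   exponentials of n times each term.  Pulling the first and last applications
   of A out with the transfer identity bounds each of these n contributions by
   a constant times ||B^k 1||, hence ||T^(n(k+2)) 1|| <= C ||B^k 1||; applied
   along k P with ||B^(kP) 1|| <= ||B^k 1||^P ||1||, this compares the two
   infima. *)

Section continuity.
Context {R : realType} {X : topologicalType}.
Implicit Types (f g : X -> R) (al : X -> X).

Lemma continuous_addf {f g} :
  continuous f -> continuous g -> continuous (fun x => f x + g x).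
Proof. by move=> fc gc x; apply: cvgD; [exact: fc|exact: gc]. Qed.

Lemma continuous_subf {f g} :
  continuous f -> continuous g -> continuous (fun x => f x - g x).
Proof. by move=> fc gc x; apply: cvgB; [exact: fc|exact: gc]. Qed.

Lemma continuous_mulf {f g} :
  continuous f -> continuous g -> continuous (fun x => f x * g x).
Proof. by move=> fc gc x; apply: cvgM; [exact: fc|exact: gc]. Qed.

Lemma continuous_expRf {f} : continuous f -> continuous (fun x => expR (f x)).
Proof. by move=> fc x; apply: continuous_comp; [exact: fc|exact: continuous_expR]. Qed.

Lemma continuous_compf {al f} :
  continuous al -> continuous f -> continuous (fun x => f (al x)).
Proof. by move=> ac fc x; apply: continuous_comp; [exact: ac|exact: fc]. Qed.

Lemma continuous_iter {al} k : continuous al -> continuous (iter k al).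
Proof.
move=> ac; elim: k => [|k IHk] x //=.
by apply: continuous_comp; [exact: IHk|exact: ac].
Qed.

Lemma continuous_sumf m (F : nat -> X -> R) : (forall i, continuous (F i)) ->
  continuous (fun x => \sum_(i < m) F i x).
Proof.
move=> Fc; elim: m => [|m IHm].
  by under eq_fun do rewrite big_ord0; exact: cst_continuous.
by under eq_fun do rewrite big_ord_recr /=; exact: continuous_addf.
Qed.

End continuity.

Section supnorm.
Context {R : realType} {X : topologicalType}.
Implicit Types f : X -> R.

Lemma supnorm_ge0 f : 0 <= supnorm f.
Proof.
rewrite /supnorm.
have [hs|/sup_out -> //] := pselect (has_sup (range (fun x => `|f x|))).
have [_ [x _ _]] := hs.1.
by rewrite (le_trans (normr_ge0 (f x))) //; apply: sup_upper_bound => //; exists x.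
Qed.

Lemma supnorm_le f c : 0 <= c -> (forall x, `|f x| <= c) -> supnorm f <= c.
Proof.
move=> c0 fc; rewrite /supnorm.
have [[x _]|X0] := pselect (exists x : X, True).
  by apply: ge_sup; [exists `|f x|, x|move=> _ [z _ <-]].
suff -> : range (fun x => `|f x|) = set0 by rewrite sup0.
by apply/seteqP; split => // y [x _ _]; exfalso; apply: X0; exists x.
Qed.

Hypothesis X_compact : compact [set: X].

Lemma continuous_bounded f : continuous f -> exists M, forall x, `|f x| <= M.
Proof.
move=> fc; have : compact (f @` [set: X]).
  by apply: continuous_compact => //; exact: continuous_subspaceT.
move=> /compact_bounded [M [_]] /(_ (`|M| + 1)).
rewrite (le_lt_trans (ler_norm _)) ?ltrDl// => /(_ erefl) fM.
by exists (`|M| + 1) => x; apply: fM; exists x.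
Qed.

Lemma ler_norm_supnorm f x : continuous f -> `|f x| <= supnorm f.
Proof.
move=> /continuous_bounded [M fM]; apply: sup_upper_bound; last by exists x.
by split; [exists `|f x|, x|exists M => _ [y _ <-]].
Qed.

Lemma ler_supnorm f x : continuous f -> f x <= supnorm f.
Proof. by move=> fc; rewrite (le_trans (ler_norm _)) // ler_norm_supnorm. Qed.

End supnorm.

Section positive_linear.
Context {R : realType} {X : topologicalType}.
Implicit Types (f g : X -> R) (al : X -> X) (T : (X -> R) -> (X -> R)).

Definition positive_linear T :=
  [/\ (forall f, continuous f -> continuous (T f)),
      (forall a f g, continuous f -> continuous g ->
         T (fun x => a * f x + g x) = (fun x => a * T f x + T g x))
    & (forall f, continuous f -> (forall x, 0 <= f x) -> forall x, 0 <= T f x)].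

Definition transfer_for al T := forall f g, continuous f -> continuous g ->
  T (fun x => f (al x) * g x) = fun x => f x * T g x.

Section positive_linear_theory.
Context {T : (X -> R) -> (X -> R)} (T_pl : positive_linear T).

Lemma plin_continuous {f} : continuous f -> continuous (T f).
Proof. by case: T_pl => Tc _ _; exact: Tc. Qed.

Lemma plin_ge0 {f} : continuous f -> (forall x, 0 <= f x) -> forall x, 0 <= T f x.
Proof. by case: T_pl => _ _ Tpos; exact: Tpos. Qed.

Lemma plin0 : T (fun _ => 0) = fun _ => 0.
Proof.
case: T_pl => _ Tlin _.
have := Tlin 1 _ _ (@cst_continuous X R 0) (@cst_continuous X R 0).
under eq_fun do rewrite mulr0 addr0.
move=> T0; apply/funext => x; have := congr1 (fun h => h x) T0 => /=.
rewrite mul1r; lra.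
Qed.

Lemma plinZ c f : continuous f -> T (fun x => c * f x) = fun x => c * T f x.
Proof.
case: T_pl => _ Tlin _ fc.
have := Tlin c _ _ fc (@cst_continuous X R 0); rewrite plin0.
by under eq_fun do rewrite addr0; under [RHS]eq_fun do rewrite addr0.
Qed.

Lemma plinD f g : continuous f -> continuous g ->
  T (fun x => f x + g x) = fun x => T f x + T g x.
Proof.
case: T_pl => _ Tlin _ fc gc.
have := Tlin 1 _ _ fc gc.
by under eq_fun do rewrite mul1r; under [RHS]eq_fun do rewrite mul1r.
Qed.

Lemma plin_sum m (F : nat -> X -> R) : (forall i, continuous (F i)) ->
  T (fun x => \sum_(i < m) F i x) = fun x => \sum_(i < m) T (F i) x.
Proof.
move=> Fc; elim: m => [|m IHm].
  under eq_fun do rewrite big_ord0.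
  by rewrite plin0; apply/funext => x; rewrite big_ord0.
under eq_fun do rewrite big_ord_recr /=.
rewrite plinD //; last exact: continuous_sumf.
by rewrite IHm; apply/funext => x; rewrite big_ord_recr.
Qed.

Lemma plin_le {f g} : continuous f -> continuous g -> (forall x, f x <= g x) ->
  forall x, T f x <= T g x.
Proof.
move=> fc gc fg x.
have gfc : continuous (fun x => g x - f x) by exact: continuous_subf.
have := plinD _ _ gfc fc; under eq_fun do rewrite subrK.
move=> ->; rewrite lerDr; apply: plin_ge0 => // y.
by rewrite subr_ge0.
Qed.

Lemma plin_le_scale {f g : X -> R} c : continuous f -> continuous g ->
  (forall y, f y <= c * g y) -> forall x, T f x <= c * T g x.
Proof.
move=> fc gc fg x.
have cgc : continuous (fun y => c * g y).
  by apply: continuous_mulf => //; exact: cst_continuous.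
by apply: le_trans (plin_le fc cgc fg x) _; rewrite (plinZ c g gc).
Qed.

End positive_linear_theory.

Lemma positive_linear_iter {T} k : positive_linear T -> positive_linear (iter k T).
Proof.
move=> T_pl; elim: k => [|k [IHc IHlin IHpos]]; first by split => //= a f g.
split => /=.
- by move=> f fc; apply: plin_continuous => //; exact: IHc.
- move=> a f g fc gc; rewrite IHlin //.
  by case: T_pl => _ Tlin _; apply: Tlin; apply: IHc.
- by move=> f fc f0 x; apply: plin_ge0 => //; [exact: IHc|exact: IHpos].
Qed.

Lemma transfer_for_iter {al T} k : continuous al -> positive_linear T ->
  transfer_for al T -> transfer_for (iter k al) (iter k T).
Proof.
move=> ac T_pl Ttr; elim: k => [|k IHk] f g fc gc //=.
rewrite (IHk (fun y => f (al y)) g) //; last exact: continuous_compf.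
by rewrite Ttr //; apply: plin_continuous gc; exact: positive_linear_iter.
Qed.

Lemma positive_linear_weighted {T psi} : continuous psi -> positive_linear T ->
  positive_linear (weighted T psi).
Proof.
move=> psic T_pl; have epc := continuous_expRf psic.
rewrite /weighted; split.
- by move=> f fc; apply: plin_continuous => //; exact: continuous_mulf.
- move=> a f g fc gc.
  under eq_fun do rewrite mulrDr mulrCA.
  by case: T_pl => _ Tlin _; apply: Tlin; exact: continuous_mulf.
- move=> f fc f0; apply: plin_ge0 => //; first exact: continuous_mulf.
  by move=> x; rewrite mulr_ge0 // expR_ge0.
Qed.

Definition birkhoff al (psi : X -> R) m x := \sum_(j < m) psi (iter j al x).

Lemma continuous_birkhoff al psi m : continuous al -> continuous psi ->
  continuous (birkhoff al psi m).
Proof.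
move=> ac psic; apply: (continuous_sumf _ (fun j x => psi (iter j al x))) => j.
by apply: continuous_compf => //; exact: continuous_iter.
Qed.

Lemma birkhoffSr al psi m x :
  birkhoff al psi m.+1 x = birkhoff al psi m x + psi (iter m al x).
Proof. by rewrite /birkhoff big_ord_recr. Qed.

Lemma birkhoffSl al psi m x :
  birkhoff al psi m.+1 x = psi x + birkhoff al psi m (al x).
Proof.
rewrite /birkhoff big_ord_recl; congr (_ + _).
by apply: eq_bigr => j _; rewrite iterSr.
Qed.

Lemma birkhoffZ al psi c m x :
  birkhoff al (fun y => c * psi y) m x = c * birkhoff al psi m x.
Proof. by rewrite /birkhoff mulr_sumr. Qed.

Lemma birkhoff_iter al psi n m x :
  birkhoff al psi (n * m) x = \sum_(i < n) birkhoff (iter n al) psi m (iter i al x).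
Proof.
elim: m => [|m IHm].
  by rewrite muln0 /birkhoff big_ord0 big1 // => i _; rewrite big_ord0.
rewrite mulnS /birkhoff addnC big_split_ord /= -/(birkhoff _ _ _ _) IHm.
rewrite -big_split /=; apply: eq_bigr => i _.
rewrite -/(birkhoff _ _ _ _) birkhoffSr; congr (_ + psi _).
by rewrite -iterM -iterD mulnC.
Qed.

Lemma iter_weighted {al T psi} m {f} : continuous al -> continuous psi ->
  positive_linear T -> transfer_for al T -> continuous f ->
  iter m (weighted T psi) f =
  iter m T (fun x => expR (birkhoff al psi m x) * f x).
Proof.
move=> ac psic T_pl Ttr fc; elim: m => [|m IHm] /=.
  by apply/funext => x; rewrite /birkhoff big_ord0 expR0 mul1r.
have Smc : continuous (fun x => expR (birkhoff al psi m x) * f x).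
  apply: continuous_mulf => //; apply: continuous_expRf.
  exact: continuous_birkhoff.
rewrite IHm /weighted.
rewrite -(transfer_for_iter m ac T_pl Ttr _ _ (continuous_expRf psic) Smc).
congr T; congr (iter m T); apply/funext => x.
by rewrite birkhoffSr expRD mulrA [expR _ * _]mulrC.
Qed.

End positive_linear.

Section log_rate.
Context {R : realType}.
Implicit Types (r : nat -> R) (y : R).

Definition log_rate r k : \bar R :=
  if 0 < r k then (ln (r k) / k%:R)%:E else -oo%E.

Definition log_rate_inf r := ereal_inf (log_rate r @` [set k | (0 < k)%N]).

Lemma log_rate_ge_expR r y m : (0 < m)%N ->
  (y%:E <= log_rate r m)%E = (expR (y * m%:R) <= r m).
Proof.
move=> m0; rewrite /log_rate; case: ifPn => rm.
  by rewrite lee_fin ler_pdivlMr ?ltr0n // -[r m in RHS](lnK rm) ler_expR.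
rewrite leeNy_eq; apply/esym/negbTE; rewrite -ltNge (le_lt_trans _ (expR_gt0 _)) //.
by rewrite leNgt.
Qed.

Section fekete.
Variable r : nat -> R.
Hypotheses (r_ge0 : forall k, 0 <= r k)
  (r_submul : forall j m, r (j + m)%N <= r j * r m).

Lemma submul_pow q m p : r (q * m + p)%N <= r m ^+ q * r p.
Proof.
elim: q => [|q IHq]; first by rewrite mul0n add0n expr0 mul1r.
rewrite mulSn -addnA (le_trans (r_submul _ _)) // exprS -mulrA.
by rewrite ler_wpM2l.
Qed.

Lemma submul_eq0 {m j} : r m = 0 -> (m <= j)%N -> r j = 0.
Proof.
move=> rm0 mj; apply/eqP; rewrite eq_le r_ge0 andbT.
by rewrite -(subnKC mj) (le_trans (r_submul _ _)) // rm0 mul0r.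
Qed.

Lemma submul_ln_le {m} : (0 < m)%N -> 0 < r m ->
  exists K, forall j, 0 < r j -> ln (r j) <= j%:R * (ln (r m) / m%:R) + K.
Proof.
move=> m0 rm; set x := ln (r m) / m%:R.
set Rm := 1 + \sum_(p < m) r p.
have Rm_gt0 : 0 < Rm by rewrite (lt_le_trans ltr01) // lerDl sumr_ge0.
exists (m%:R * `|x| + ln Rm) => j rj.
have p_lt : (j %% m < m)%N by rewrite ltn_mod.
have rp_le : r (j %% m) <= Rm.
  rewrite /Rm (bigD1 (Ordinal p_lt)) //=.
  have : 0 <= \sum_(i < m | i != Ordinal p_lt) r i by rewrite sumr_ge0.
  lra.
have rj_le : r j <= r m ^+ (j %/ m) * Rm.
  rewrite {1}(divn_eq j m) (le_trans (submul_pow _ _ _)) //.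
  by rewrite ler_wpM2l // exprn_ge0.
have lnrj : ln (r j) <= (j %/ m)%:R * ln (r m) + ln Rm.
  rewrite mulr_natl -lnXn // -lnM ?posrE ?exprn_gt0 //.
  by rewrite ler_ln ?posrE ?mulr_gt0 ?exprn_gt0.
have lnrm : ln (r m) = m%:R * x.
  by rewrite /x mulrCA mulfV ?mulr1 // pnatr_eq0 -lt0n.
suff : (j %/ m)%:R * ln (r m) <= j%:R * x + m%:R * `|x| by lra.
rewrite lnrm mulrA -natrM.
have -> : (j %/ m * m)%N = (j - j %% m)%N by rewrite {2}(divn_eq j m) addnK.
rewrite natrB ?leq_mod // mulrBl lerD2l -mulNr.
rewrite (le_trans (ler_norm _)) // normrM normrN ler_wpM2r //.
by rewrite ger0_norm // ler_nat ltnW.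
Qed.

Lemma submul_log_rate_le {m e} : (0 < m)%N -> 0 < r m -> 0 < e ->
  \forall j \near \oo, (log_rate r j <= (ln (r m) / m%:R + e)%:E)%E.
Proof.
move=> m0 rm e0; have [K lnrK] := submul_ln_le m0 rm.
near=> j.
rewrite /log_rate; case: ifPn => rj; last by rewrite leNye.
have j0 : (0 < j)%N by near: j; exists 1%N.
have Kj : K / e <= j%:R by near: j; exact: nbhs_infty_ger.
rewrite lee_fin ler_pdivrMr ?ltr0n //.
move: Kj (lnrK _ rj); rewrite ler_pdivrMr //; lra.
Unshelve. all: by end_near.
Qed.

Lemma log_rate_cvg : log_rate r @ \oo --> log_rate_inf r.
Proof.
rewrite -cvg_shiftS; apply: limn_esup_le_cvg; last first.
  by move=> k; apply: ereal_inf_lbound; exists k.+1.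
apply: le_ereal_inf_tmp => _ [m /= m0 <-].
have [rm|] := boolP (0 < r m); last first.
  rewrite lt_neqAle r_ge0 andbT negbK => /eqP rm0.
  suff -> : limn_esup (fun k => log_rate r k.+1) = -oo%E by rewrite leNye.
  apply: (cvgNy_limn_einf_sup _).2.
  apply/cvgeNyPle => M; exists m => // k /= mk.
  rewrite /log_rate (submul_eq0 (esym rm0) (leq_trans mk (leqnSn _))).
  by rewrite ltxx leNye.
rewrite [log_rate r m]/log_rate rm; apply/lee_addgt0Pr => e e0.
have [N _ HN] := submul_log_rate_le m0 rm e0.
rewrite limn_esup_lim; apply: lime_le; first exact: is_cvg_esups.
exists N => // k /= Nk; apply: ge_ereal_sup => _ [j /= kj <-].
by rewrite -EFinD; apply: HN; rewrite /= (leq_trans Nk) // (leq_trans kj).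
Qed.

End fekete.

Lemma natr_mul_bounded_le0 (u v : R) : (forall P : nat, P%:R * u <= v) -> u <= 0.
Proof.
move=> uv; rewrite leNgt; apply/negP => u0.
have := archi_boundP (divr_ge0 (normr_ge0 v) (ltW u0)).
rewrite ltr_pdivrMr // => /lt_le_trans/(_ (uv _)).
by rewrite ltNge ler_norm.
Qed.

Lemma expR_le_geometric_bound r y a c C b : (0 < c)%N -> 0 <= b ->
  (forall m, (0 < m)%N -> expR (y * m%:R) <= r m) ->
  (forall P, r (a * P + c)%N <= C * b ^+ P) -> expR (y * a%:R) <= b.
Proof.
move=> c0 b0 r_ge r_le.
have lower P : expR (y * (a * P + c)%:R) <= C * b ^+ P.
  by rewrite (le_trans (r_ge _ _)) // addn_gt0 c0 orbT.
have C_gt0 : 0 < C.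
  have := lower 0%N; rewrite expr0 mulr1.
  by apply: lt_le_trans; exact: expR_gt0.
have b_gt0 : 0 < b.
  rewrite lt_neqAle b0 andbT; apply/negP => /eqP b_eq0.
  by have := lower 1%N; rewrite -b_eq0 expr1 mulr0 leNgt expR_gt0.
rewrite -(lnK b_gt0) ler_expR -subr_le0.
apply: (@natr_mul_bounded_le0 _ (ln C - y * c%:R)) => P.
have := lower P; rewrite -[C * _]lnK ?posrE ?mulr_gt0 ?exprn_gt0 // ler_expR.
rewrite lnM ?posrE ?exprn_gt0 // lnXn // natrD natrM -mulr_natl; lra.
Qed.

Lemma log_rate_inf_scale_le r s a : (0 < a)%N ->
  (forall y, (forall m, (0 < m)%N -> expR (y * m%:R) <= r m) ->
     forall k, (0 < k)%N -> expR (y * a%:R * k%:R) <= s k) ->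
  (a%:R%:E * log_rate_inf r <= log_rate_inf s)%E.
Proof.
move=> a0 rs; apply: le_ereal_inf_tmp => _ [k /= k0 <-].
have inf_le m : (0 < m)%N -> (log_rate_inf r <= log_rate r m)%E.
  by move=> m0; apply: ereal_inf_lbound; exists m.
move: inf_le; case: (log_rate_inf r) => [y| |] inf_le.
- rewrite -EFinM log_rate_ge_expR // [_ * y]mulrC; apply: rs => // m m0.
  by rewrite -log_rate_ge_expR //; exact: inf_le.
- by have := inf_le 1%N isT; rewrite /log_rate; case: ifP.
- by rewrite gt0_muleNy ?leNye // lte_fin ltr0n.
Qed.

End log_rate.

Section iterates_of_one.
Context {R : realType} {X : topologicalType}.
Hypothesis X_compact : compact [set: X].
Context {T : (X -> R) -> (X -> R)} (T_pl : positive_linear T).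

Lemma supnorm_iter_submul j m :
  supnorm (iter (j + m) T (fun _ => 1)) <=
  supnorm (iter j T (fun _ => 1)) * supnorm (iter m T (fun _ => 1)).
Proof.
have Tk_pl k := positive_linear_iter k T_pl.
have one_cont : continuous (fun _ : X => 1 : R) by exact: cst_continuous.
have Tk1c k : continuous (iter k T (fun _ => 1)).
  exact (plin_continuous (Tk_pl k) one_cont).
apply: supnorm_le => [|x]; first by rewrite mulr_ge0 ?supnorm_ge0.
rewrite ger0_norm; last by apply: (plin_ge0 (Tk_pl _) one_cont) => y; exact: ler01.
rewrite iterD mulrC.
apply: le_trans (plin_le_scale (Tk_pl j) _ (Tk1c m) one_cont _ x) _.
  by move=> y; rewrite mulr1; exact: ler_supnorm X_compact _ _ (Tk1c m).
by rewrite ler_wpM2l ?supnorm_ge0 //; exact: ler_supnorm X_compact _ _ (Tk1c j).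
Qed.

Lemma log_spec_radE :
  log_spec_rad T = log_rate_inf (fun k => supnorm (iter k T (fun _ => 1))).
Proof.
apply/cvg_lim => //; apply: log_rate_cvg => [k|j m].
  exact: supnorm_ge0.
exact: supnorm_iter_submul.
Qed.

End iterates_of_one.

Lemma expR_sum_le_sum_expR {R : realType} n (y : 'I_n -> R) : (0 < n)%N ->
  expR (\sum_(i < n) y i) <= \sum_(i < n) expR (n%:R * y i).
Proof.
case: n y => // n y _.
have [i0 _ y_le] := @arg_maxP _ _ 'I_n.+1 ord0 xpredT y isT.
apply: (@le_trans _ _ (expR (n.+1%:R * y i0))).
  rewrite ler_expR (@le_trans _ _ (\sum_(i < n.+1) y i0)) //.
    by apply: ler_sum => i _; exact: y_le.
  by rewrite sumr_const card_ord mulr_natl.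
by rewrite (bigD1 i0) //= lerDl sumr_ge0 // => i _; exact: expR_ge0.
Qed.

Section spectral_radius_comparison.
Context {R : realType} {X : topologicalType}.
Hypothesis X_compact : compact [set: X].
Context {alpha : X -> X} {A : (X -> R) -> (X -> R)} {phi : X -> R} {n : nat}.
Hypotheses (alpha_cont : continuous alpha) (A_pl : positive_linear A)
  (A_tr : transfer_for alpha A) (phi_cont : continuous phi).

Let psi x := n%:R * phi x.
Let beta := iter n alpha.
Let B := weighted (iter n A) psi.
Let E k x := expR (birkhoff beta psi k x).

Let psi_cont : continuous psi.
Proof. by apply: continuous_mulf => //; exact: cst_continuous. Qed.

Let expR_psi_cont : continuous (fun x => expR (psi x)).
Proof. exact: continuous_expRf. Qed.

Let beta_cont : continuous beta.
Proof. exact: continuous_iter. Qed.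

Let E_cont k : continuous (E k).
Proof. by apply: continuous_expRf; exact: continuous_birkhoff. Qed.

Let A_iter_pl m : positive_linear (iter m A).
Proof. exact: positive_linear_iter. Qed.

Let A_iter_tr m : transfer_for (iter m alpha) (iter m A).
Proof. exact: transfer_for_iter. Qed.

Let B_pl : positive_linear B.
Proof. exact: positive_linear_weighted. Qed.

Let iter_nA k g : iter (n * k) A g = iter k (iter n A) g.
Proof. by rewrite mulnC iterM. Qed.

Lemma iter_weighted_one k : iter k B (fun _ => 1) = iter (n * k) A (E k).
Proof.
rewrite /B (iter_weighted k beta_cont psi_cont (A_iter_pl n) (A_iter_tr n)
  (@cst_continuous X R 1)) iter_nA.
by congr (iter k _ _); apply/funext => x; rewrite mulr1.
Qed.

Let expR_psi_iter_cont i : continuous (fun x => expR (psi (iter i alpha x))).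
Proof. exact: continuous_compf (continuous_iter i alpha_cont) expR_psi_cont. Qed.

Let E_iter_cont k i : continuous (fun x => E k (iter i alpha x)).
Proof. exact: continuous_compf (continuous_iter i alpha_cont) (E_cont k). Qed.

Lemma iter_shift_E i k : iter (n + i) A (fun x => E k.+1 (iter i alpha x)) =
  fun y => E k y * iter (n + i) A (fun x => expR (psi (iter i alpha x))) y.
Proof.
rewrite -(A_iter_tr (n + i) _ _ (E_cont k) (expR_psi_iter_cont i)).
congr (iter _ A); apply/funext => x.
by rewrite /E birkhoffSl expRD mulrC /beta -iterD.
Qed.

Lemma iter_E_succ k : iter (n * k) A (E k.+1) =
  fun y => expR (psi y) * iter k B (fun _ => 1) y.
Proof.
have Bk_tr := transfer_for_iter k beta_cont (A_iter_pl n) (A_iter_tr n).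
rewrite iter_weighted_one !iter_nA -Bk_tr //.
by congr (iter k _ _); apply/funext => x; rewrite /E birkhoffSr expRD mulrC.
Qed.

Let c1 i := supnorm (iter (n + i) A (fun x => expR (psi (iter i alpha x)))).
Let c2 i := supnorm (iter (n - i) A (fun x => expR (psi x))).

Lemma iter_shifted_E_le i k x : (i <= n)%N ->
  iter (n * k.+2) A (fun y => E k.+2 (iter i alpha y)) x <=
  c1 i * c2 i * supnorm (iter k B (fun _ => 1)).
Proof.
(* The n (k + 2) applications of A split as (n - i) + n k + (n + i). *)
move=> i_le_n; set h := fun y => E k.+2 (iter i alpha y).
set b := supnorm (iter k B (fun _ => 1)).
have h1_cont := plin_continuous (A_iter_pl (n + i)) (E_iter_cont k.+2 i).
have h2_cont := plin_continuous (A_iter_pl (n * k)) h1_cont.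
have le_c1 y : iter (n + i) A h y <= c1 i * E k.+1 y.
  rewrite /h iter_shift_E mulrC ler_wpM2r ?expR_ge0 //.
  exact: ler_supnorm X_compact _ _
    (plin_continuous (A_iter_pl _) (expR_psi_iter_cont i)).
have le_c1b y : iter (n * k) A (iter (n + i) A h) y <= c1 i * b * expR (psi y).
  apply: le_trans (plin_le_scale (A_iter_pl _) _ h1_cont (E_cont _) le_c1 y) _.
  rewrite iter_E_succ -mulrA ler_wpM2l ?supnorm_ge0 // mulrC.
  rewrite ler_wpM2r ?expR_ge0 //.
  exact: ler_supnorm X_compact _ _
    (plin_continuous (positive_linear_iter k B_pl) (@cst_continuous X R 1)).
have -> : iter (n * k.+2) A h x =
    iter (n - i) A (iter (n * k) A (iter (n + i) A h)) x.
  by rewrite -!iterD; congr (iter _ A _ x); lia.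
apply: le_trans (plin_le_scale (A_iter_pl _) _ h2_cont expR_psi_cont le_c1b x) _.
rewrite [in X in _ <= X]mulrAC ler_wpM2l ?mulr_ge0 ?supnorm_ge0 //.
exact: ler_supnorm X_compact _ _ (plin_continuous (A_iter_pl _) expR_psi_cont).
Qed.

Hypothesis n_gt0 : (0 < n)%N.

Lemma supnorm_weighted_iter_le : exists2 C, 0 <= C & forall k,
  supnorm (iter (n * k.+2) (weighted A phi) (fun _ => 1)) <=
  C * supnorm (iter k B (fun _ => 1)).
Proof.
exists (\sum_(i < n) c1 i * c2 i) => [|k].
  by rewrite sumr_ge0 // => i _; rewrite mulr_ge0 ?supnorm_ge0.
set N := (n * k.+2)%N.
have T_pl := positive_linear_weighted phi_cont A_pl.
apply: supnorm_le => [|x].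
  rewrite mulr_ge0 ?supnorm_ge0 ?sumr_ge0 // => i _.
  by rewrite mulr_ge0 ?supnorm_ge0.
rewrite ger0_norm; last first.
  apply: (plin_ge0 (positive_linear_iter N T_pl) (@cst_continuous X R 1)) => y.
  exact: ler01.
rewrite (iter_weighted N alpha_cont phi_cont A_pl A_tr (@cst_continuous X R 1)).
have sum_cont := continuous_sumf n _ (E_iter_cont k.+2).
apply: le_trans (plin_le (A_iter_pl N) _ sum_cont _ x) _.
- apply: continuous_mulf; last exact: cst_continuous.
  by apply: continuous_expRf; exact: continuous_birkhoff.
- move=> y; rewrite mulr1 birkhoff_iter /E.
  under [X in _ <= X]eq_bigr do rewrite birkhoffZ.
  exact: expR_sum_le_sum_expR.
rewrite (plin_sum (A_iter_pl N) n _ (E_iter_cont k.+2)) mulr_suml.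
by apply: ler_sum => i _; exact: iter_shifted_E_le (ltnW (ltn_ord i)).
Qed.

End spectral_radius_comparison.

Theorem lemma1p12 (R : realType) (X : topologicalType)
  (hcomp : compact [set: X]) (hhaus : hausdorff_space X)
  (alpha : X -> X) (halpha : continuous alpha)
  (A : (X -> R) -> (X -> R)) (hA : is_transfer_operator alpha A)
  (phi : X -> R) (hphi : continuous phi) (n : nat) (hn : (0 < n)%N) :
  ((n%:R)%:E * lambda phi A <=
     lambda (fun x => (n%:R * phi x)%R) (iter n A))%E.
Proof.
have [A_pl A_tr] : positive_linear A /\ transfer_for alpha A by case: hA.
set psi := fun x => n%:R * phi x.
have psi_cont : continuous psi.
  by apply: continuous_mulf => //; exact: cst_continuous.
have B_pl := positive_linear_weighted psi_cont (positive_linear_iter n A_pl).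
rewrite /lambda (log_spec_radE hcomp (positive_linear_weighted hphi A_pl)).
rewrite (log_spec_radE hcomp B_pl).
apply: log_rate_inf_scale_le => // y expR_le_r k k0.
have [C C_ge0 r_le] := supnorm_weighted_iter_le hcomp halpha A_pl A_tr hphi hn.
set b := fun m => supnorm (iter m (weighted (iter n A) psi) (fun _ => 1)).
have b_pow P : b (k * P)%N <= b k ^+ P * b 0%N.
  rewrite -[(k * P)%N]addn0 mulnC.
  apply: submul_pow => [m|j m]; [exact: supnorm_ge0|exact: supnorm_iter_submul].
rewrite -mulrA -natrM.
apply: (expR_le_geometric_bound _ _ _ (n * 2)%N (C * b 0%N) _ _ _ expR_le_r).
- by rewrite muln_gt0 hn.
- exact: supnorm_ge0.
- move=> P; rewrite (_ : (n * k * P + n * 2 = n * (k * P).+2)%N); last by lia.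
  apply: le_trans (r_le _) _.
  by rewrite -mulrA ler_wpM2l // mulrC; exact: b_pow.
Qed.
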